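(* Let $m\ge 2$ and $s,\ell,r_1,\dots,r_m\ge 1$ be integers, let $n=\sum_{i=1}^m(\ell+r_i)$ and $k=m\ell-s$, and let $\mathcal C$ be an $[n,k,\ell;r_1,\dots,r_m]$-PMDS code over a finite field $\mathbb{F}_q$. Then $\mathcal C$ has a generator matrix of the form $G=(B_1\mid\dots\mid B_m)$ where $B_i=(C_i\mid D_i)$ with $C_i\in\mathbb{F}_q^{k\times\ell}$ and $D_i\in\mathbb{F}_q^{k\times r_i}$ for $i=1,\dots,m$, and the matrix $G_C=(C_1\mid\dots\mid C_m)\in\mathbb{F}_q^{k\times m\ell}$ is of the form $G_C=[I_k\mid A]$ with $A\in\mathbb{F}_q^{k\times s}$ superregular.
   Context: A matrix is superregular if every square submatrix of it is nonsingular. An $[n,k]$-MDS code over a field $\mathbb{F}$ is a linear code in $\mathbb{F}^n$ of dimension $k$ and minimum Hamming distance $n-k+1$. PMDS codes: let $\ell,m,r_1,\dots,r_m$ be positive integers, $n=\sum_{i=1}^m(r_i+\ell)$, and $C\subseteq\mathbb{F}^n$ a linear code of dimension $k<n$ with generator matrix $G=(B_1\mid\dots\mid B_m)$, $B_i\in\mathbb{F}^{k\times(r_i+\ell)}$. Then $C$ is an $[n,k,\ell;r_1,\dots,r_m]$-PMDS code if (i) for each $i$ the row space of $B_i$ is an $[r_i+\ell,\ell]$-MDS code, and (ii) for any choice of $r_i$ erased coordinates in the $i$-th block for every $i$, the code obtained from $C$ by puncturing these coordinates is an $[m\ell,k]$-MDS code. *)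

From HB Require Import structures.
From mathcomp Require Import all_boot all_order all_algebra.
Set Implicit Arguments. Unset Strict Implicit. Unset Printing Implicit Defensive.
Import GRing.Theory.
Local Open Scope ring_scope.

(* Linear codes of length N are represented by generator matrices
   M : 'M[F]_(K, N); the code is the row space of M. *)

Definition wt (F : fieldType) (N : nat) (v : 'rV[F]_N) : nat :=
  #|[set j : 'I_N | v 0 j != 0]|.

Definition is_MDS (F : fieldType) (p N K : nat) (M : 'M[F]_(p, N)) : Prop :=
  [/\ \rank M = K,
      (forall v : 'rV[F]_N, (v <= M)%MS -> v != 0 -> (N - K + 1 <= wt v)%N) &
      (exists2 v : 'rV[F]_N, (v <= M)%MS /\ v != 0 & wt v = (N - K + 1)%N)].

Definition puncture (F : fieldType) (p N : nat) (M : 'M[F]_(p, N))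
    (S : {set 'I_N}) : 'M[F]_(p, #|S|) :=
  colsub (fun j : 'I_#|S| => enum_val j) M.

Definition blockgen (F : fieldType) (m k l : nat) (r : 'I_m -> nat)
    (B : forall i : 'I_m, 'M[F]_(k, l + r i)) :
    'M[F]_(k, \sum_(i < m) (l + r i)) :=
  \mxrow_(i < m) B i.

Definition is_PMDS (F : fieldType) (m k l : nat) (r : 'I_m -> nat)
    (B : forall i : 'I_m, 'M[F]_(k, l + r i)) : Prop :=
  [/\ (k < \sum_(i < m) (l + r i))%N,
      row_free (blockgen B),
      (forall i : 'I_m, is_MDS l (B i)) &
      (forall E : forall i : 'I_m, {set 'I_(l + r i)},
         (forall i, #|E i| = r i) ->
         is_MDS k
           (\mxrow_(i < m) puncture (B i) (~: E i)))].

Definition superregular (F : fieldType) (a b : nat) (A : 'M[F]_(a, b)) : Prop :=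
  forall (p : nat) (f : 'I_p -> 'I_a) (g : 'I_p -> 'I_b),
    injective f -> injective g -> \det (mxsub f g A) != 0.

Lemma ks_eq (m l s : nat) : (s <= m * l)%N ->
  (m * l - s + s = \sum_(i < m) l)%N.
Proof. by move=> hs; rewrite subnK // sum_nat_const card_ord. Qed.

From HB Require Import structures.
From mathcomp Require Import all_boot all_order all_algebra.
Set Implicit Arguments. Unset Strict Implicit. Unset Printing Implicit Defensive.
Import GRing.Theory.
Local Open Scope ring_scope.

(* Puncturing the last r_i coordinates of every block leaves the code
   generated by G_C = (C_1 | ... | C_m), which the PMDS property makes an
   [ml, k]-MDS code: its nonzero codewords have weight > ml - k = s.  Hence
   the first k columns P of G_C are invertible (a codeword vanishing on them
   has weight <= s), and P^-1 G is a generator matrix with P^-1 G_C = [I | A].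
   A singular p x p minor of A would give a nonzero codeword of [I | A]
   supported on p coordinates of I and at most s - p of A, so A is
   superregular. *)

Lemma mulmx_castmxr (R : pzSemiRingType) m p n n' (e : n = n')
    (A : 'M[R]_(m, p)) (B : 'M[R]_(p, n)) :
  A *m castmx (erefl p, e) B = castmx (erefl m, e) (A *m B).
Proof. by case: n' / e; rewrite !castmx_id. Qed.

Section Weight.
Variable F : fieldType.

Lemma wt_leq_card N (v : 'rV[F]_N) (S : {set 'I_N}) :
  (forall j, j \notin S -> v 0 j = 0) -> (wt v <= #|S|)%N.
Proof.
move=> vS; apply/subset_leq_card/subsetP => j; rewrite inE.
by apply: contraR => /vS ->; rewrite eqxx.
Qed.

Lemma wt_row_mx a b (x : 'rV[F]_a) (y : 'rV[F]_b) :
  wt (row_mx x y) = (wt x + wt y)%N.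
Proof.
rewrite /wt -!sum1_card [LHS]big_mkcond big_split_ord /=.
by congr addn; rewrite [RHS]big_mkcond; apply: eq_bigr => j _;
  rewrite !inE ?row_mxEl ?row_mxEr.
Qed.

Lemma wt_mxrow q (q_ : 'I_q -> nat) (V : forall i, 'rV[F]_(q_ i)) :
  wt (\mxrow_i V i) = (\sum_i wt (V i))%N.
Proof.
rewrite /wt -sum1_card big_mkcond /=.
under [RHS]eq_bigr do rewrite -sum1_card big_mkcond /=.
rewrite sig_big_dep /= (reindex _ tagnat.sig_bij_on) /=.
by apply: eq_bigr => j _; rewrite !inE mxE.
Qed.

Lemma wt_puncture_imset a N (f : 'I_a -> 'I_N) (v : 'rV[F]_N) (S : {set 'I_N}) :
  injective f -> S = [set f j | j in setT] ->
  wt (puncture v S) = wt (colsub f v).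
Proof.
move=> injf defS.
rewrite /wt -(card_imset _ enum_val_inj) -(card_imset _ injf).
apply: eq_card => x; apply/imsetP/imsetP => [[j] | [j]].
  rewrite inE mxE => vj ->; have /imsetP[i _ ji] : enum_val j \in f @: setT.
    by rewrite -defS enum_valP.
  by exists i; rewrite // inE mxE -ji.
rewrite inE mxE => vj ->; have fjS : f j \in S by rewrite defS imset_f.
exists (enum_rank_in fjS (f j)); last by rewrite enum_rankK_in.
by rewrite inE mxE enum_rankK_in.
Qed.

End Weight.

Definition codewords_wt_gt (F : fieldType) k N (G : 'M[F]_(k, N)) (d : nat) :=
  forall u : 'rV[F]_k, u != 0 -> (d < wt (u *m G))%N.

Section Codewords.
Variables (F : fieldType) (k : nat).

Lemma codewords_wt_gt_castmx N N' (e : N = N') (G : 'M[F]_(k, N)) d :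
  codewords_wt_gt (castmx (erefl k, e) G) d <-> codewords_wt_gt G d.
Proof. by case: N' / e; rewrite castmx_id. Qed.

Lemma codewords_wt_gt_mull N (P : 'M[F]_k) (G : 'M[F]_(k, N)) d :
  P \in unitmx -> codewords_wt_gt G d -> codewords_wt_gt (P *m G) d.
Proof.
move=> Pu Gd u u0; rewrite mulmxA; apply: Gd.
by apply: contra u0 => /eqP uP0; rewrite -(mulmxK Pu u) uP0 mul0mx.
Qed.

Lemma codewords_wt_gt_lsub_unit s (G : 'M[F]_(k, k + s)) :
  codewords_wt_gt G s -> lsubmx G \in unitmx.
Proof.
move=> Gs; rewrite unitmxE unitfE; apply/negP => /det0P[u u0 uP0].
have := Gs u u0; rewrite -(hsubmxK G) mul_mx_row uP0 wt_row_mx.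
have -> : wt (0 : 'rV[F]_k) = 0%N.
  by apply/eqP; rewrite cards_eq0; apply/eqP/setP => j; rewrite !inE mxE eqxx.
rewrite add0n ltnNge -[X in (_ <= X)%N](card_ord s) -cardsT.
by rewrite wt_leq_card // => j; rewrite inE.
Qed.

Lemma superregular_codewords_wt_gt s (A : 'M[F]_(k, s)) :
  codewords_wt_gt (row_mx 1%:M A) s -> superregular A.
Proof.
move=> As p f g injf injg; apply/negP => /det0P[u u0 uA0].
pose w := u *m rowsub f 1%:M.
have w0 : w != 0.
  apply: contra u0 => /eqP w0; have : w *m colsub f 1%:M = u.
    rewrite -mulmxA mulmx_colsub mulmx1 -[RHS]mulmx1; congr (_ *m _).
    by apply/matrixP => i j; rewrite !mxE (inj_eq injf).
  by rewrite w0 mul0mx => <-.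
have wf : (wt w <= p)%N.
  rewrite -[p]card_ord -cardsT -(card_imset _ injf) wt_leq_card // => j fj.
  rewrite mxE big1 // => i _; rewrite !mxE (_ : f i == j = false) ?mulr0 //.
  by apply: contraNF fj => /eqP <-; apply: imset_f.
have wAg : (wt (w *m A) <= s - p)%N.
  have <- : #|~: [set g j | j in setT]| = (s - p)%N.
    by rewrite cardsCs setCK card_imset // cardsT !card_ord.
  apply: wt_leq_card => j; rewrite inE negbK => /imsetP[i _ ->].
  have : colsub g (w *m A) = 0.
    by rewrite -mulmx_colsub -mulmxA mul_rowsub_mx mul1mx -mxsubrc uA0.
  by move/matrixP/(_ 0 i); rewrite !mxE.
have := As w w0; rewrite mul_mx_row mulmx1 wt_row_mx.
have ps : (p <= s)%N.
  by rewrite -[p]card_ord -[s]card_ord; apply: leq_card injg.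
by rewrite ltnNge (leq_trans (leq_add wf wAg)) // subnKC.
Qed.

End Codewords.

Lemma PMDS_codewords_wt_gt (F : fieldType) (m k l : nat) (r : 'I_m -> nat)
    (B : forall i : 'I_m, 'M[F]_(k, l + r i)) :
  is_PMDS B -> codewords_wt_gt (\mxrow_i lsubmx (B i)) (m * l - k).
Proof.
case=> _ _ _ punctMDS u u0.
pose K i : {set 'I_(l + r i)} := [set lshift (r i) j | j in setT].
have cardK i : #|K i| = l.
  by rewrite card_imset ?cardsT ?card_ord //; apply: lshift_inj.
have cardCK i : #|~: K i| = r i by rewrite cardsCs setCK card_ord cardK addKn.
have [rkM wtM _] := punctMDS (fun i => ~: K i) cardCK.
set M := \mxrow_i _ in rkM wtM.
have uM0 : u *m M != 0 by rewrite mulmx_free_eq0 // /row_free rkM.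
have sum_cardCCK : (\sum_i #|~: ~: K i|)%N = (m * l)%N.
  by under eq_bigr do rewrite setCK cardK; rewrite sum_nat_const card_ord.
have := wtM _ (submxMl u M) uM0; rewrite !mul_mxrow !wt_mxrow sum_cardCCK addn1.
congr (_ < _)%N; apply: eq_bigr => i _.
rewrite mulmx_colsub -/(puncture _ _) mulmx_lsub lsubmxEsub.
by apply: wt_puncture_imset; [apply: lshift_inj | rewrite setCK].
Qed.

Theorem theorem15 (F : finFieldType) (m s l : nat) (r : 'I_m -> nat)
  (hm : (2 <= m)%N) (hs1 : (1 <= s)%N) (hl : (1 <= l)%N)
  (hr : forall i, (1 <= r i)%N) (hs : (s <= m * l)%N)
  (B : forall i : 'I_m, 'M[F]_(m * l - s, l + r i)) :
  is_PMDS B ->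
  exists B' : forall i : 'I_m, 'M[F]_(m * l - s, l + r i),
    [/\ (blockgen B' == blockgen B)%MS, row_free (blockgen B') &
        exists A : 'M[F]_(m * l - s, s),
          superregular A /\
          \mxrow_(i < m) lsubmx (B' i) =
            castmx (erefl (m * l - s)%N, ks_eq hs) (row_mx 1%:M A)].
Proof.
move=> PMDS_B; set k := (m * l - s)%N.
pose G := castmx (erefl k, esym (ks_eq hs)) (\mxrow_i lsubmx (B i)).
have Gs : codewords_wt_gt G s.
  apply/codewords_wt_gt_castmx.
  by have := PMDS_codewords_wt_gt PMDS_B; rewrite subKn.
pose P := lsubmx G; have Pu : P \in unitmx := codewords_wt_gt_lsub_unit Gs.
pose A := invmx P *m rsubmx G.
have sysG : invmx P *m G = row_mx 1%:M A.
  by rewrite -{1}(hsubmxK G) mul_mx_row mulVmx.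
have eqB : (blockgen (fun i => invmx P *m B i) :=: blockgen B)%MS.
  rewrite /blockgen -mul_mxrow; apply: eqmxMfull.
  by rewrite row_full_unit unitmx_inv.
have [_ freeB _ _] := PMDS_B.
exists (fun i => invmx P *m B i); split; first exact/eqmxP.
  by rewrite /row_free eqB.
exists A; split.
  apply: superregular_codewords_wt_gt; rewrite -sysG.
  by apply: codewords_wt_gt_mull; rewrite ?unitmx_inv.
rewrite -(eq_mxrow (fun i => mulmx_lsub _ (B i))) -mul_mxrow -sysG.
have -> : \mxrow_i lsubmx (B i) = castmx (erefl k, ks_eq hs) G.
  by rewrite castmx_comp castmx_id.
by rewrite mulmx_castmxr.
Qed.
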